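(* Let $\mathcal{B}=(v_1,\dots,v_N)$ with $v_1,\dots,v_N$ independent and uniform in $\mathbb{F}_2^n$, let $C^k\in\mathbb{F}_2^N$ be the $k$-th column ($C^k_j=(v_j)_k$), define $k\sim_{\mathcal B}j$ iff $C^k=C^j$ or $C^k=1-C^j$, and let $|I|$ be the number of equivalence classes of $\sim_{\mathcal B}$ on $\{1,\dots,n\}$. Then for $i=1,\dots,n$, $${n\brace i}\frac{1}{2^{(N-1)(n-i)}}\prod_{j=1}^i\left(1-\frac{j-1}{2^{N-1}}\right)\le\mathbb{P}(|I|=i)\le{n\brace i}\frac{i^{n-i}}{2^{(N-1)(n-i)}}\prod_{j=1}^i\left(1-\frac{j-1}{2^{N-1}}\right),$$ where ${n\brace i}$ is the Stirling number of the second kind. *)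

From mathcomp Require Import all_boot all_order all_algebra.
Set Implicit Arguments. Unset Strict Implicit. Unset Printing Implicit Defensive.
Import Order.TTheory GRing.Theory Num.Theory.

Fixpoint stirling2 (n k : nat) : nat :=
  match n, k with
  | 0, 0 => 1
  | 0, _.+1 => 0
  | _.+1, 0 => 0
  | n'.+1, k'.+1 => k'.+1 * stirling2 n' k'.+1 + stirling2 n' k'
  end.

Definition family (N n : nat) := {ffun 'I_N -> 'rV['F_2]_n}.

Definition column N n (B : family N n) (k : 'I_n) : 'I_N -> 'F_2 :=
  fun j => B j ord0 k.

Definition simB N n (B : family N n) : rel 'I_n :=
  fun k j => [forall r, column B k r == column B j r]
          || [forall r, column B k r == (1 - column B j r)%R].

Definition nclasses N n (B : family N n) : nat :=
  #|equivalence_partition (simB B) [set: 'I_n]|.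

Definition prob_nclasses (R : numFieldType) N n (i : nat) : R :=
  (#|[set B : family N n | nclasses B == i]|%:R / #|{: family N n}|%:R)%R.

From Pilot Require Import Defs.
From mathcomp Require Import all_boot all_order all_algebra.
From mathcomp Require Import ring.
Import Order.TTheory GRing.Theory Num.Theory.
Set Implicit Arguments. Unset Strict Implicit. Unset Printing Implicit Defensive.

(* Two columns are ~_B-equivalent exactly when they differ by a constant vector,
   i.e. when they have the same normalization x |-> (x_r - x_0)_(r > 0), a 2-to-1
   map onto F_2^(N-1).  So |I| is the size of the image of n independent uniform
   points of a set of size K = 2^(N-1), and recursion on n (a new point either
   lands in the current image or enlarges it) gives the exact value
   P(|I| = i) = S(n,i) K (K-1) ... (K-i+1) / K^n.  This is the lower bound; the
   upper bound exceeds it by the factor i^(n-i) >= 1. *)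

Lemma sum_nat_bool_card (T : finType) (P : pred T) :
  \sum_(t : T) (P t : nat) = #|[set t | P t]|.
Proof. by rewrite -sum1dep_card [RHS]big_mkcond; apply: eq_bigr => t _; case: (P t). Qed.

Section FfunCons.
Variables (T : Type) (n : nat).

Definition ffun_cons (t : T) (g : {ffun 'I_n -> T}) : {ffun 'I_n.+1 -> T} :=
  [ffun k => if unlift ord0 k is Some j then g j else t].

Definition ffun_behead (f : {ffun 'I_n.+1 -> T}) : {ffun 'I_n -> T} :=
  [ffun j => f (lift ord0 j)].

Lemma ffun_cons0 t g : ffun_cons t g ord0 = t.
Proof. by rewrite ffunE unlift_none. Qed.

Lemma ffun_cons_lift t g j : ffun_cons t g (lift ord0 j) = g j.
Proof. by rewrite ffunE liftK. Qed.

Lemma ffun_behead_cons t g : ffun_behead (ffun_cons t g) = g.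
Proof. by apply/ffunP => j; rewrite ffunE ffun_cons_lift. Qed.

Lemma ffun_cons_eta (f : {ffun 'I_n.+1 -> T}) : ffun_cons (f ord0) (ffun_behead f) = f.
Proof.
apply/ffunP => k; rewrite ffunE.
by case: unliftP => [j ->|->] //; rewrite ffunE.
Qed.

Lemma ffun_cons_bij : bijective (fun p : T * {ffun 'I_n -> T} => ffun_cons p.1 p.2).
Proof.
exists (fun f : {ffun 'I_n.+1 -> T} => (f ord0, ffun_behead f)) => [[t g]|f] /=.
  by rewrite ffun_cons0 ffun_behead_cons.
exact: ffun_cons_eta.
Qed.

End FfunCons.

Section ImageCount.
Variables (T A : finType) (e : T -> A) (c : nat).
Hypothesis card_preim_e : forall X : {set A}, #|e @^-1: X| = c * #|X|.

Definition eimage n (f : {ffun 'I_n -> T}) : {set A} := [set e (f k) | k : 'I_n].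

Lemma eimage0 (f : {ffun 'I_0 -> T}) : eimage f = set0.
Proof. by apply/setP => a; rewrite inE; apply/imsetP => -[[]]. Qed.

Lemma eimage_cons n t (g : {ffun 'I_n -> T}) : eimage (ffun_cons t g) = e t |: eimage g.
Proof.
apply/setP => a; rewrite in_setU1; apply/imsetP/idP.
  case=> k _ ->; case: (unliftP ord0 k) => [j ->|->].
    by rewrite ffun_cons_lift imset_f ?orbT.
  by rewrite ffun_cons0 eqxx.
case/orP => [/eqP ->|/imsetP [j _ ->]].
  by exists ord0; rewrite ?ffun_cons0.
by exists (lift ord0 j); rewrite ?ffun_cons_lift.
Qed.

Lemma sum_e_in (X : {set A}) : \sum_(t : T) (e t \in X) = c * #|X|.
Proof. by rewrite -card_preim_e -sum_nat_bool_card. Qed.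

Lemma sum_e_notin (X : {set A}) : \sum_(t : T) (e t \notin X) = c * (#|A| - #|X|).
Proof.
by rewrite -(cardsC X) addKn -sum_e_in; apply: eq_bigr => t _; rewrite inE.
Qed.

Lemma sum_eimage_cons n (g : {ffun 'I_n -> T}) i :
  \sum_(t : T) (#|eimage (ffun_cons t g)| == i) =
    (#|eimage g| == i) * (c * #|eimage g|)
  + (#|eimage g|.+1 == i) * (c * (#|A| - #|eimage g|)).
Proof.
rewrite -sum_e_in -sum_e_notin !big_distrr -big_split /=.
apply: eq_bigr => t _; rewrite eimage_cons cardsU1.
by case: (e t \in eimage g); rewrite /= ?muln0 ?muln1 ?addn0.
Qed.

Lemma card_eimage n i :
  #|[set f : {ffun 'I_n -> T} | #|eimage f| == i]| = stirling2 n i * #|A| ^_ i * c ^ n.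
Proof.
rewrite -sum_nat_bool_card; elim: n i => [|n IHn] i.
  under eq_bigr do rewrite eimage0 cards0.
  by rewrite sum_nat_const card_ffun card_ord; case: i.
rewrite (reindex _ (onW_bij _ (ffun_cons_bij T n))).
rewrite -(pair_bigA _ (fun t g => (#|eimage (ffun_cons t g)| == i : nat))) exchange_big /=.
under eq_bigr do rewrite sum_eimage_cons.
rewrite big_split /=.
case: i => [|i].
  by rewrite !big1 // => g _; case: eqP => // ->; rewrite muln0.
rewrite [X in X + _](eq_bigr (fun g => (#|eimage g| == i.+1) * (c * i.+1))); last first.
  by move=> g _; case: eqP => // ->.
rewrite [X in _ + X](eq_bigr (fun g => (#|eimage g| == i) * (c * (#|A| - i)))); last first.
  by move=> g _; rewrite eqSS; case: eqP => // ->.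
rewrite -!big_distrl !IHn /= ffactnSr expnS.
ring.
Qed.

End ImageCount.

Section Normalize.
Local Open Scope ring_scope.
Variables (V : finZmodType) (m : nat).

Definition normalize (x : {ffun 'I_m.+1 -> V}) : {ffun 'I_m -> V} :=
  [ffun r => x (lift ord0 r) - x ord0].

Definition denormalize (p : {ffun 'I_m -> V} * V) : {ffun 'I_m.+1 -> V} :=
  ffun_cons p.2 [ffun r => p.1 r + p.2].

Lemma normalize_eq x y : normalize x = normalize y <-> exists b, forall r, x r = y r + b.
Proof.
split=> [/ffunP eq_xy | [b eq_xy]].
  exists (x ord0 - y ord0) => r; case: (unliftP ord0 r) => [r' ->|->].
    have := eq_xy r'; rewrite !ffunE => /(canRL (subrK _)) ->.
    by rewrite addrAC -addrA.
  by rewrite addrC subrK.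
by apply/ffunP => r; rewrite !ffunE !eq_xy opprD addrACA subrr addr0.
Qed.

Lemma card_normalize_preim (X : {set {ffun 'I_m -> V}}) :
  #|normalize @^-1: X| = #|V| * #|X|.
Proof.
have denormK : cancel denormalize (fun x => (normalize x, x ord0)).
  case=> a b; rewrite /denormalize /= ffun_cons0; congr pair.
  by apply/ffunP => r; rewrite ffunE ffun_cons_lift ffun_cons0 ffunE addrK.
have normK : cancel (fun x => (normalize x, x ord0)) denormalize.
  move=> x; rewrite -[RHS]ffun_cons_eta; congr ffun_cons.
  by apply/ffunP => r; rewrite !ffunE subrK.
have -> : normalize @^-1: X = denormalize @: setX X setT.
  by rewrite (can2_imset_pre _ denormK normK); apply/setP => x; rewrite !inE andbT.
by rewrite (card_imset _ (can_inj denormK)) cardsX cardsT mulnC.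
Qed.

End Normalize.

Lemma card_preim_partition (T A : finType) (f : T -> A) (D : {set T}) :
  #|preim_partition f D| = #|f @: D|.
Proof.
rewrite /preim_partition /equivalence_partition.
rewrite (imset_comp (fun a => [set y in D | a == f y]) f).
apply: card_in_imset => _ _ /imsetP[x Dx ->] /imsetP[y Dy ->] /setP/(_ x).
by rewrite !inE Dx !eqxx => /esym/eqP.
Qed.

Lemma F2_eq01 (b : 'F_2) : b = 0%R \/ b = 1%R.
Proof. by case: b => [[|[|k]]] // lt_b2; [left|right]; apply: val_inj. Qed.

Lemma F2_1subE (y : 'F_2) : (1 - y = y + 1)%R.
Proof. by rewrite (oppr_pchar2 (pchar_Fp _)) // addrC. Qed.

Section Families.
Variables (N n : nat).

Definition columns (B : Defs.family N n) : {ffun 'I_n -> {ffun 'I_N -> 'F_2}} :=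
  [ffun k => [ffun r => column B k r]].

Lemma columns_bij : bijective columns.
Proof.
exists (fun F : {ffun 'I_n -> {ffun 'I_N -> 'F_2}} => [ffun r => (\row_k F k r)%R]) => [B|F].
  by apply/ffunP => r; apply/rowP => k; rewrite !ffunE mxE !ffunE.
by apply/ffunP => k; apply/ffunP => r; rewrite !ffunE /column !ffunE mxE.
Qed.

End Families.

Section NormalizedColumns.
Variables (M n : nat).

Lemma simB_normalize (B : Defs.family M.+1 n) k j :
  simB B k j = (normalize (columns B k) == normalize (columns B j)).
Proof.
apply/idP/eqP => [/orP[] /forallP eq_kj | /normalize_eq [b eq_kj]].
- by apply/normalize_eq; exists 0%R => r; rewrite !ffunE addr0; apply/eqP/eq_kj.
- by apply/normalize_eq; exists 1%R => r; rewrite !ffunE -F2_1subE; apply/eqP/eq_kj.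
apply/orP; case: (F2_eq01 b) => b01; [left|right]; apply/forallP => r.
  by move: (eq_kj r); rewrite !ffunE b01 addr0 => ->.
by move: (eq_kj r); rewrite !ffunE b01 F2_1subE => ->.
Qed.

Lemma nclasses_eimage (B : Defs.family M.+1 n) :
  nclasses B = #|eimage (@normalize _ M) (columns B)|.
Proof.
rewrite /nclasses.
have -> : equivalence_partition (simB B) setT =
          preim_partition (fun k => normalize (columns B k)) setT.
  by apply: eq_imset => k; apply/setP => j; rewrite !inE simB_normalize.
rewrite card_preim_partition; apply: eq_card => a.
by apply/imsetP/imsetP => -[k _ ->]; exists k.
Qed.

Lemma card_nclasses_eq i :
  #|[set B : Defs.family M.+1 n | nclasses B == i]| = stirling2 n i * (2 ^ M) ^_ i * 2 ^ n.
Proof.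
have -> : [set B : Defs.family M.+1 n | nclasses B == i] =
          @columns M.+1 n @^-1: [set F | #|eimage (@normalize _ M) F| == i].
  by apply/setP => B; rewrite !inE nclasses_eimage.
rewrite on_card_preimset; last exact/onW_bij/columns_bij.
by rewrite (card_eimage (@card_normalize_preim _ M)) card_ffun !card_Fp // card_ord.
Qed.

End NormalizedColumns.

Section Probability.
Local Open Scope ring_scope.

Lemma prod_one_sub_ratio (R : numFieldType) (K i : nat) : (0 < K)%N ->
  \prod_(1 <= j < i.+1) (1 - (j.-1)%:R / K%:R) = (K ^_ i)%:R / K%:R ^+ i :> R.
Proof.
move=> K_gt0; have K_neq0 : K%:R != 0 :> R by rewrite pnatr_eq0 -lt0n.
elim: i => [|i IHi]; first by rewrite big_geq // divr1.
rewrite big_nat_recr //= IHi ffactnSr.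
have [le_iK | lt_Ki] := leqP i K; last by rewrite ffact_small // !mul0r.
by rewrite natrM natrB // exprSr; field; rewrite K_neq0 expf_neq0.
Qed.

Lemma prob_nclassesE (R : numFieldType) M n i :
  prob_nclasses R M.+1 n i = (stirling2 n i)%:R * ((2 ^ M) ^_ i)%:R / (2 ^ M)%:R ^+ n.
Proof.
rewrite /prob_nclasses card_nclasses_eq card_ffun card_mx card_Fp // !card_ord mul1n.
rewrite -expnM (mulnC n) expnM expnS expnMn !natrM !natrX.
by field; rewrite !expf_neq0 ?pnatr_eq0.
Qed.

End Probability.

Local Open Scope ring_scope.

Theorem corollary8p6 (R : realFieldType) (N n i : nat)
  (hN : (1 <= N)%N) (hi1 : (1 <= i)%N) (hin : (i <= n)%N) :
  let P := \prod_(1 <= j < i.+1) (1 - (j.-1)%:R / (2%:R : R) ^+ N.-1) in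
  (stirling2 n i)%:R / (2%:R : R) ^+ (N.-1 * (n - i)) * P
    <= prob_nclasses R N n i /\
  prob_nclasses R N n i
    <= (stirling2 n i)%:R * (i%:R : R) ^+ (n - i) / (2%:R : R) ^+ (N.-1 * (n - i)) * P.
Proof.
case: N hN => [//|M] _ /=.
have K_neq0 : (2 ^ M)%:R != 0 :> R by rewrite pnatr_eq0 expn_eq0.
rewrite exprM -(natrX R 2 M) prod_one_sub_ratio ?expn_gt0 // prob_nclassesE.
have probE : (stirling2 n i)%:R / (2 ^ M)%:R ^+ (n - i) * (((2 ^ M) ^_ i)%:R / (2 ^ M)%:R ^+ i)
           = (stirling2 n i)%:R * ((2 ^ M) ^_ i)%:R / (2 ^ M)%:R ^+ n :> R.
  have -> : (2 ^ M)%:R ^+ n = (2 ^ M)%:R ^+ (n - i) * (2 ^ M)%:R ^+ i :> R.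
    by rewrite -exprD subnK.
  by field; rewrite !expf_neq0.
rewrite probE; split => //.
rewrite -probE !(mulrAC _ (i%:R ^+ _)) ler_peMr ?exprn_ege1 ?ler1n // probE.
by rewrite -prob_nclassesE /prob_nclasses divr_ge0.
Qed.
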